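(* Let $f:\mathbb{Z}\times\mathbb{Z}\to\mathbb{C}$ satisfy, for all $m,n,l\in\mathbb{Z}$, $f(m,n)-f(n,m)=n-m$ and $(n-m)f(m+n,l)=f(n,l)f(m,n+l)-f(m,l)f(n,m+l)$. Then $f(m,0)=f(0,0)$ for all $m\in\mathbb{Z}$.
   Context: These two identities are exactly the conditions for $x_mx_n=f(m,n)x_{m+n}$ to be a left-symmetric algebra structure on the Witt algebra (basis $\{x_n\}$, $[x_m,x_n]=(n-m)x_{m+n}$) with commutator equal to the Witt bracket. *)

From mathcomp Require Import all_boot all_order all_algebra.
From mathcomp Require Import complex.
From mathcomp Require Import reals.

From mathcomp Require Import all_boot all_order all_algebra.
From mathcomp Require Import complex.
From mathcomp Require Import reals.
From mathcomp Require Import ring.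
Set Implicit Arguments.
Unset Strict Implicit.
Unset Printing Implicit Defensive.

Import GRing.Theory Num.Theory.
Local Open Scope ring_scope.
Local Open Scope complex_scope.

(* Both identities are homogeneous of degree one, so f(a m, b m) / m is again a
   solution and it suffices to prove f(1,0) = f(0,0).  The second identity with
   m = 0 gives f(n,l) (f(n+l,0) - f(l,0)) = 0, so every f(n,0) is 0 or
   c := f(0,0).  If f(1,0) = 0 <> c, then f(n,0) = 0 for n = 1, 2, 3 and
   f(n,0) = c for n = -1, -2, -3, which forces f(p,q) = q - p whenever p > 0 > q
   and p + q <= 0.  Four instances of the second identity then overdetermine
   f(-1,-1), f(-1,-2) and c, and a linear combination of them reads 22 = 0. *)

Section WittStructureConstants.
Variable K : numFieldType.

Definition witt_skew (f : int -> int -> K) : Prop :=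
  forall m n : int, f m n - f n m = (n - m)%:~R.

Definition witt_left_symmetric (f : int -> int -> K) : Prop :=
  forall m n l : int,
    (n - m)%:~R * f (m + n) l = f n l * f m (n + l) - f m l * f n (m + l).

Definition witt_dilate (f : int -> int -> K) (m a b : int) : K :=
  f (a * m) (b * m) / m%:~R.

Lemma witt_skew_dilate f m :
  m != 0 -> witt_skew f -> witt_skew (witt_dilate f m).
Proof.
move=> m0 fS a b; rewrite /witt_dilate -mulrBl fS -mulrBl intrM mulfK //.
by rewrite intr_eq0.
Qed.

(* For m = 0 both sides of the dilated identity are 0, since x / 0 = 0. *)
Lemma witt_left_symmetric_dilate f m :
  witt_left_symmetric f -> witt_left_symmetric (witt_dilate f m).
Proof.
move=> fL a b l; rewrite /witt_dilate !mulrDl.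
have [->|m0] := eqVneq m 0; first by rewrite !invr0 !mulr0 subrr.
have M0 : m%:~R != 0 :> K by rewrite intr_eq0.
rewrite !mulf_div -mulrBl -fL -mulrBl intrM.
by field.
Qed.

Section Solution.
Variable f : int -> int -> K.
Hypothesis f_skew : witt_skew f.
Hypothesis f_lsym : witt_left_symmetric f.

Lemma witt0E k : f 0 k = f k 0 + k%:~R.
Proof. by have := f_skew 0 k; rewrite subr0 => <-; rewrite addrC subrK. Qed.

Lemma witt_mul_shift0 n l : f n l * (f (n + l) 0 - f l 0) = 0.
Proof.
have := f_lsym 0 n l; rewrite !add0r subr0 !witt0E intrD => h.
suff -> : f n l * (f (n + l) 0 - f l 0) =
  f n l * (f (n + l) 0 + (n%:~R + l%:~R)) - (f l 0 + l%:~R) * f n l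
  - n%:~R * f n l by rewrite h subrr.
by ring.
Qed.

Lemma witt_snd0_dichotomy n : f n 0 = 0 \/ f n 0 = f 0 0.
Proof.
have := witt_mul_shift0 n 0; rewrite addr0 => /eqP.
by rewrite mulf_eq0 subr_eq0 => /orP[/eqP|/eqP]; [left|right].
Qed.

Lemma witt_snd0_add p q : f p 0 = 0 -> f q 0 = 0 -> p != q -> f (p + q) 0 = 0.
Proof.
move=> fp fq pq; have := f_lsym p q 0; rewrite !addr0 fp fq !mul0r subrr.
by move/eqP; rewrite mulf_eq0 intr_eq0 subr_eq0 eq_sym (negPf pq) => /eqP.
Qed.

Lemma witt20 : f 1 0 = 0 -> f 2 0 = 0.
Proof.
move=> f10; have := witt_mul_shift0 1 1; rewrite f10 subr0 => /eqP.
rewrite mulf_eq0 => /orP[/eqP f11 | /eqP]; last exact.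
have := f_lsym (-1) 1 1; rewrite addNr witt0E f10 f11 !mul0r mulr0 subrr add0r.
by move/eqP; rewrite mulf_eq0 !intr_eq0.
Qed.

Lemma witt_snd0_opp p :
  f 0 0 != 0 -> f p 0 = 0 -> p != 0 -> f (- p) 0 = f 0 0.
Proof.
move=> c0 fp p0; case: (witt_snd0_dichotomy (- p)) => // fNp.
have := f_lsym p (- p) 0; rewrite subrr !addr0 fp fNp !mul0r subrr.
move/eqP; rewrite mulf_eq0 (negPf c0) orbF intr_eq0 -opprD oppr_eq0.
by rewrite -mulr2n mulrn_eq0 (negPf p0).
Qed.

Lemma witt_mixed p q :
  f 0 0 != 0 -> f p 0 = 0 -> f q 0 = f 0 0 -> f (p + q) 0 = f 0 0 ->
  f q p = 0 /\ f p q = (q - p)%:~R.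
Proof.
move=> c0 fp fq fpq; have fqp : f q p = 0.
  have := witt_mul_shift0 q p; rewrite [q + p]addrC fpq fp subr0 => /eqP.
  by rewrite mulf_eq0 (negPf c0) orbF => /eqP.
by split=> //; rewrite -f_skew fqp subr0.
Qed.

Lemma witt10_eq0 : f 1 0 = 0 -> f 0 0 = 0.
Proof.
move=> f10; apply/eqP; apply: contraT => c0.
have f20 := witt20 f10.
have f30 : f 3 0 = 0 by exact: (witt_snd0_add f10 f20 isT).
have fN10 := witt_snd0_opp c0 f10 isT.
have fN20 := witt_snd0_opp c0 f20 isT.
have fN30 := witt_snd0_opp c0 f30 isT.
have [fN11 f1N1] := witt_mixed c0 f10 fN10 (erefl (f 0 0)).
have [_ f2N2] := witt_mixed c0 f20 fN20 (erefl (f 0 0)).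
have [_ f3N3] := witt_mixed c0 f30 fN30 (erefl (f 0 0)).
have [_ f1N2] := witt_mixed c0 f10 fN20 fN10.
have [_ f2N3] := witt_mixed c0 f20 fN30 fN10.
set X := f (-1) (-2); set Y := f (-1) (-1).
have e1 : 4 * f 2 (-2) = f 3 (-2) * f (-1) 1 - X * f 3 (-3) := f_lsym (-1) 3 (-2).
have e2 : 3 * f 1 (-1) = f 2 (-1) * f (-1) 1 - Y * f 2 (-2) := f_lsym (-1) 2 (-1).
have e3 : 2 * f 0 (-1) = f 1 (-1) * f (-1) 0 - Y * f 1 (-2) := f_lsym (-1) 1 (-1).
have e4 : -3 * f 1 (-2) = X * f 2 (-3) - f 2 (-2) * f (-1) 0 := f_lsym 2 (-1) (-2).
have f0N1 := witt0E (-1).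
have : 9 * (3 * f 1 (-1) - (f 2 (-1) * f (-1) 1 - Y * f 2 (-2)))
     - 10 * (4 * f 2 (-2) - (f 3 (-2) * f (-1) 1 - X * f 3 (-3)))
     - 12 * (2 * f 0 (-1) - (f 1 (-1) * f (-1) 0 - Y * f 1 (-2)))
     - 12 * (-3 * f 1 (-2) - (X * f 2 (-3) - f 2 (-2) * f (-1) 0)) = 22.
  by ring: fN11 f1N1 f2N2 f3N3 f1N2 f2N3 f0N1 fN10.
by rewrite e1 e2 e3 e4 !subrr !mulr0 !subrr => /eqP; rewrite eq_sym pnatr_eq0.
Qed.

Lemma witt10 : f 1 0 = f 0 0.
Proof. by case: (witt_snd0_dichotomy 1) => // f10; rewrite f10 witt10_eq0. Qed.

End Solution.
End WittStructureConstants.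

Theorem lemma3p1 (R : realType) (f : int -> int -> R[i]) :
  (forall m n : int, f m n - f n m = (n - m)%:~R) ->
  (forall m n l : int,
      (n - m)%:~R * f (m + n) l = f n l * f m (n + l) - f m l * f n (m + l)) ->
  forall m : int, f m 0 = f 0 0.
Proof.
move=> fS fL m; have [-> // | m0] := eqVneq m 0.
have := witt10 (witt_skew_dilate m0 fS) (witt_left_symmetric_dilate m fL).
have M0 : m%:~R != 0 :> R[i] by rewrite intr_eq0.
by rewrite /witt_dilate mul1r mul0r => /(congr1 ( *%R^~ m%:~R)); rewrite !(divfK M0).
Qed.
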